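(* Let $l>0$, $\Omega=(0,\pi)\times(-l,l)$, $\sigma\in(0,1)$, $\Omega_O\subset\overline\Omega$ nonempty closed and symmetric with respect to the $x$-axis ($(x,y)\in\Omega_O\iff(x,-y)\in\Omega_O$). Let $f\in(C^0(\overline\Omega))'$, $\gamma_\pm>0$, $\psi_-\in O_-(\gamma_-)$, $\psi_+\in O_+(\gamma_+)$, and let $u=u_{f,\psi_-,\psi_+}$. Then: (i) if $\psi_-$ and $\psi_+$ are even in $y$ and $f^o=0$, then $u^o\equiv0$ in $\overline\Omega$; (ii) if $\psi_-=-\psi_+=\psi$ with $\psi$ even in $y$ and $f^e=0$, then $u^e\equiv0$ in $\overline\Omega$.
   Context: $H^2_*(\Omega):=\{v\in H^2(\Omega): v=0\text{ on }\{0,\pi\}\times(-l,l)\}$ with scalar product $(u,v)_{H^2_*(\Omega)}:=\int_\Omega\big(\Delta u\Delta v+(1-\sigma)(2u_{xy}v_{xy}-u_{xx}v_{yy}-u_{yy}v_{xx})\big)$; elements identified with continuous functions on $\overline\Omega$. $(C^0(\overline\Omega))'$: dual of $C^0(\overline\Omega)$ with pairing $\langle f,u\rangle$. $O_+(\gamma):=\{\psi\in C^0(\Omega_O):\psi\ge\gamma\}$, $O_-(\gamma):=\{\psi\in C^0(\Omega_O):\psi\le-\gamma\}$. $H^2_{*,\psi_-,\psi_+}(\Omega):=\{v\in H^2_*(\Omega):\psi_-\le v\le\psi_+\text{ on }\Omega_O\}$; $u_{f,\psi_-,\psi_+}$ is the unique $u\in H^2_{*,\psi_-,\psi_+}(\Omega)$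 with $(u,\varphi-u)_{H^2_*(\Omega)}\ge\langle f,\varphi-u\rangle$ for all $\varphi\in H^2_{*,\psi_-,\psi_+}(\Omega)$. For $u\in C^0(\overline\Omega)$: $u^e(x,y)=\frac{u(x,y)+u(x,-y)}2$, $u^o(x,y)=\frac{u(x,y)-u(x,-y)}2$. For $f\in(C^0(\overline\Omega))'$: $\langle f^e,u\rangle:=\langle f,u^e\rangle$ and $\langle f^o,u\rangle:=\langle f,u^o\rangle$. *)

From HB Require Import structures.
From mathcomp Require Import all_boot all_order all_algebra.
From mathcomp Require Import all_classical all_reals all_analysis.
Import Order.TTheory GRing.Theory Num.Theory.
Import numFieldNormedType.Exports.
Local Open Scope classical_set_scope.
Local Open Scope ring_scope.

Set Implicit Arguments.
Unset Strict Implicit.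
Unset Printing Implicit Defensive.

Definition Om (R : realType) (l : R) : set (R * R) :=
  [set p | 0 < p.1 < pi /\ - l < p.2 < l].
Definition Omc (R : realType) (l : R) : set (R * R) :=
  [set p | 0 <= p.1 <= pi /\ - l <= p.2 <= l].

Definition mu2 (R : realType) := ((@lebesgue_measure R) \x (@lebesgue_measure R))%E.

(* partial derivatives: false = d/dx, true = d/dy *)
Definition dir (R : realType) (b : bool) : R * R := if b then (0, 1) else (1, 0).
Definition pD (R : realType) (b : bool) (f : R * R -> R) : R * R -> R :=
  fun p => 'D_(dir R b) f p.
Definition iterD (R : realType) (s : seq bool) (f : R * R -> R) : R * R -> R :=
  foldr (fun b g => pD b g) f s.

Definition test_fun (R : realType) (l : R) (phi : R * R -> R) : Prop :=
  (forall (s : seq bool) (b : bool) (p : R * R), derivable (iterD s phi) p (dir R b)) /\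
  (forall s : seq bool, continuous (iterD s phi)) /\
  (exists K : set (R * R), compact K /\ K `<=` Om l /\ (forall p, ~ K p -> phi p = 0)).

Definition L2 (R : realType) (l : R) (g : R * R -> R) : Prop :=
  measurable_fun (Om l) g /\ (@mu2 R).-integrable (Om l) (fun p => (g p ^+ 2)%:E).

Definition weak_deriv (R : realType) (l : R) (v : R * R -> R) (a : seq bool)
    (g : R * R -> R) : Prop :=
  forall phi, test_fun l phi ->
    \int[@mu2 R]_(p in Om l) (v p * iterD a phi p)
    = (-1) ^+ size a * \int[@mu2 R]_(p in Om l) (g p * phi p).

(* H^2(Omega), elements identified with continuous functions on the closure *)
Definition H2 (R : realType) (l : R) (v : R * R -> R) : Prop :=
  {within Omc l, continuous v} /\ L2 l v /\
  (forall a : seq bool, (size a <= 2)%N -> exists g, L2 l g /\ weak_deriv l v a g).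

Definition H2s (R : realType) (l : R) (v : R * R -> R) : Prop :=
  H2 l v /\ (forall y : R, - l < y < l -> v (0, y) = 0 /\ v (pi, y) = 0).

Definition D2wit (R : realType) (l : R) (v : R * R -> R)
    (w : (R * R -> R) * (R * R -> R) * (R * R -> R)) : Prop :=
  L2 l w.1.1 /\ L2 l w.1.2 /\ L2 l w.2 /\
  weak_deriv l v [:: false; false] w.1.1 /\
  weak_deriv l v [:: false; true] w.1.2 /\
  weak_deriv l v [:: true; true] w.2.

Definition H2form (R : realType) (l sigma : R)
    (wu wv : (R * R -> R) * (R * R -> R) * (R * R -> R)) : R :=
  \int[@mu2 R]_(p in Om l)
    ((wu.1.1 p + wu.2 p) * (wv.1.1 p + wv.2 p)
     + (1 - sigma) * (2 * wu.1.2 p * wv.1.2 p - wu.1.1 p * wv.2 p - wu.2 p * wv.1.1 p)).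

Definition wsub (R : realType) (a b : (R * R -> R) * (R * R -> R) * (R * R -> R)) :=
  ((fun p => a.1.1 p - b.1.1 p, fun p => a.1.2 p - b.1.2 p), fun p => a.2 p - b.2 p).

Definition dualC0 (R : realType) (l : R) (f : (R * R -> R) -> R) : Prop :=
  (forall (u v : R * R -> R) (a : R),
      {within Omc l, continuous u} -> {within Omc l, continuous v} ->
      f (fun p => a * u p + v p) = a * f u + f v) /\
  (exists C : R, forall (u : R * R -> R) (M : R),
      {within Omc l, continuous u} -> (forall p, Omc l p -> `|u p| <= M) ->
      `|f u| <= C * M).

Definition Oplus (R : realType) (OmO : set (R * R)) (gamma : R) (psi : R * R -> R) :=
  {within OmO, continuous psi} /\ (forall p, OmO p -> gamma <= psi p).
Definition Ominus (R : realType) (OmO : set (R * R)) (gamma : R) (psi : R * R -> R) :=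
  {within OmO, continuous psi} /\ (forall p, OmO p -> psi p <= - gamma).

Definition Kset (R : realType) (l : R) (OmO : set (R * R)) (psim psip : R * R -> R)
    (v : R * R -> R) : Prop :=
  H2s l v /\ (forall p, OmO p -> psim p <= v p <= psip p).

Definition VIsol (R : realType) (l sigma : R) (OmO : set (R * R))
    (f : (R * R -> R) -> R) (psim psip : R * R -> R) (u : R * R -> R) : Prop :=
  Kset l OmO psim psip u /\
  forall wu, D2wit l u wu ->
  forall phi, Kset l OmO psim psip phi ->
  forall wphi, D2wit l phi wphi ->
    f (fun p => phi p - u p) <= H2form l sigma wu (wsub wphi wu).

(* u = u_{f,psi_-,psi_+}: THE unique solution of the variational inequality
   (uniqueness as elements of H^2_*, i.e. as continuous functions on the closure) *)
Definition is_u_f (R : realType) (l sigma : R) (OmO : set (R * R))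
    (f : (R * R -> R) -> R) (psim psip : R * R -> R) (u : R * R -> R) : Prop :=
  VIsol l sigma OmO f psim psip u /\
  (forall w, VIsol l sigma OmO f psim psip w -> forall p, Omc l p -> w p = u p).

Definition refl (R : realType) (u : R * R -> R) : R * R -> R := fun p => u (p.1, - p.2).
Definition evenp (R : realType) (u : R * R -> R) : R * R -> R :=
  fun p => (u p + u (p.1, - p.2)) / 2.
Definition oddp (R : realType) (u : R * R -> R) : R * R -> R :=
  fun p => (u p - u (p.1, - p.2)) / 2.

Definition fodd_zero (R : realType) (l : R) (f : (R * R -> R) -> R) : Prop :=
  forall u, {within Omc l, continuous u} -> f (oddp u) = 0.
Definition feven_zero (R : realType) (l : R) (f : (R * R -> R) -> R) : Prop :=
  forall u, {within Omc l, continuous u} -> f (evenp u) = 0.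

Definition even_on (R : realType) (OmO : set (R * R)) (psi : R * R -> R) : Prop :=
  forall p, OmO p -> psi (p.1, - p.2) = psi p.

From Pilot Require Import Defs.
From HB Require Import structures.
From mathcomp Require Import all_boot all_order all_algebra.
From mathcomp Require Import all_classical all_reals all_analysis.
From mathcomp Require Import measurable_realfun.
From mathcomp Require Import ring lra.
Import Order.TTheory GRing.Theory Num.Theory.
Import numFieldNormedType.Exports.
Local Open Scope classical_set_scope.
Local Open Scope ring_scope.

(* The reflection (x, y) |-> (x, -y) preserves Omega, the two-dimensional Lebesgue
   measure and the test functions.  Hence the signed reflections
   v |-> v(x, -y) and v |-> -v(x, -y) map H^2_*(Omega) onto itself, carry second weak
   derivatives to second weak derivatives (u_xy picking up an extra sign) and leave
   the bilinear form invariant.  Under the hypotheses of (i), resp. (ii), the first,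
   resp. second, of them also preserves the obstacle constraint and the functional
   f, so it maps the solution u of the variational inequality to a solution; by
   uniqueness u(x, -y) = u(x, y), resp. u(x, -y) = - u(x, y). *)

Lemma RintegralN d (T : measurableType d) (R : realType) (mu : {measure set T -> \bar R})
    (D : set T) (f : T -> R) :
  \int[mu]_(x in D) - f x = - \int[mu]_(x in D) f x.
Proof.
rewrite /Rintegral [in LHS]integralE [in RHS]integralE.
have -> : (fun x => (- f x)%:E) = (\- (EFin \o f))%E by apply/funext => x; rewrite EFinN.
rewrite funeposN funenegN.
have := @integral_ge0 _ _ _ mu D _ (fun x _ => funepos_ge0 (EFin \o f) x).
have := @integral_ge0 _ _ _ mu D _ (fun x _ => funeneg_ge0 (EFin \o f) x).
by case: (\int[mu]_(x in D) _)%E => [x| |] //; case: (\int[mu]_(x in D) _)%E => [y| |] //= _ _;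
  rewrite ?oppr0 ?opprB.
Qed.

Section DirectionalDerivative.
Context {R : realType}.

Lemma derive_comp_linear {U V W : normedModType R} (L : U -> V) (f : V -> W) x v :
  linear L -> 'D_v (f \o L) x = 'D_(L v) f (L x).
Proof.
move=> linL; rewrite /derive.
suff -> : (fun h : R => h^-1 *: ((f \o L \o shift x) (h *: v) - (f \o L) x)) =
  (fun h => h^-1 *: ((f \o shift (L x)) (h *: L v) - f (L x))) by [].
by apply/funext => h /=; rewrite linL.
Qed.

Lemma derivable_comp_linear {U V W : normedModType R} (L : U -> V) (f : V -> W) x v :
  linear L -> derivable (f \o L) x v = derivable f (L x) (L v).
Proof.
move=> linL; rewrite /derivable.
suff -> : (fun h : R => h^-1 *: ((f \o L \o shift x) (h *: v) - (f \o L) x)) =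
  (fun h => h^-1 *: ((f \o shift (L x)) (h *: L v) - f (L x))) by [].
by apply/funext => h /=; rewrite linL.
Qed.

Variable V : normedModType R.

Lemma derive_lineE (f : V -> R) x v : 'D_v f x = 'D_1 (fun h : R => f (h *: v + x)) 0.
Proof.
rewrite /derive.
suff -> : (fun h : R => h^-1 *: ((f \o shift x) (h *: v) - f x)) =
  (fun h => h^-1 *: (((fun h => f (h *: v + x)) \o shift 0) (h *: 1) - f (0 *: v + x))) by [].
by apply/funext => h /=; rewrite addr0 scale0r add0r [_%:A]mulr1.
Qed.

Lemma derivable_oppv (f : V -> R) x v : derivable f x v -> derivable f x (- v).
Proof.
move=> /derivable1P/derivable1_diffP df; apply/derivable1P.
rewrite (_ : (fun h : R => _) = (fun h => f (h *: v + x)) \o -%R); last first.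
  by apply/funext => h /=; rewrite scalerN scaleNr.
apply/derivable1_diffP/differentiable_comp; first exact/derivable1_diffP/derivable_opp.
by rewrite /= oppr0.
Qed.

Lemma derive_oppv (f : V -> R) x v : derivable f x v -> 'D_(- v) f x = - 'D_v f x.
Proof.
move=> /derivable1P df; rewrite !derive_lineE.
rewrite (_ : (fun h : R => _) = (fun h => f (h *: v + x)) \o -%R); last first.
  by apply/funext => h /=; rewrite scalerN scaleNr.
rewrite -!derive1E derive1_comp ?oppr0 //.
by rewrite [X in _ * X]derive1E derive_val mulrN1.
Qed.
End DirectionalDerivative.

Section Reflection.
Context {R : realType}.
(* [mu2] is defined on R * R equipped with the product of the Lebesgue sigma-algebras. *)
Local Notation plane := (measurableTypeR R * measurableTypeR R)%type.

Definition yrefl (p : R * R) : R * R := (p.1, - p.2).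

Lemma yreflK : involutive yrefl.
Proof. by case=> x y; rewrite /yrefl /= opprK. Qed.

Lemma linear_yrefl : linear yrefl.
Proof.
move=> a [x1 y1] [x2 y2].
by apply: injective_projections => //=; rewrite opprD scalerN.
Qed.

Lemma yrefl_dir b : yrefl (dir R b) = if b then - dir R b else dir R b.
Proof.
by case: b; rewrite /yrefl /dir /= ?oppr0 //; congr pair; rewrite oppr0.
Qed.

Lemma measurable_yrefl : measurable_fun [set: plane] yrefl.
Proof.
apply: measurable_fun_pair; first exact: measurable_fst.
exact: measurableT_comp (measurable_snd).
Qed.

Lemma mu2_yrefl (A : set plane) : measurable A -> @mu2 R (yrefl @^-1` A) = @mu2 R A.
Proof.
move=> mA; symmetry; rewrite -[RHS]/(pushforward (@mu2 R) yrefl A).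
refine (@product_measure_unique _ _ (measurableTypeR R) (measurableTypeR R) _
  lebesgue_measure lebesgue_measure (pushforward (@mu2 R) (yrefl : plane -> plane)) _ A mA).
  move=> B C mB mC; rewrite /pushforward; cbv beta.
  transitivity (@mu2 R (B `*` (-%R @^-1` C))).
    by congr (mu2 _); apply/seteqP; split => -[].
  rewrite /mu2 product_measure1E //; last first.
    by rewrite -[X in measurable X]setTI; exact: measurable_funN.
  by congr (_ * _)%E; exact: lebesgue_measureN.
Unshelve. exact: measurable_yrefl.
Qed.
End Reflection.

Section SymmetricDomain.
Context {R : realType}.
Local Notation plane := (measurableTypeR R * measurableTypeR R)%type.
Local Notation mu := (@mu2 R).
Variable D : set plane.
Hypotheses (mD : measurable D) (symD : yrefl @^-1` D = D).

Lemma measurable_fun_yrefl d (U : measurableType d) (G : plane -> U) :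
  measurable_fun D G -> measurable_fun D (G \o yrefl).
Proof.
move=> mG _ B mB; rewrite -[in X in measurable X]symD comp_preimage -preimage_setI.
by rewrite -[X in measurable X]setTI; apply: measurable_yrefl => //; exact: mG.
Qed.

Local Open Scope ereal_scope.

Lemma ge0_integral_yrefl (F : plane -> \bar R) : measurable_fun D F ->
  (forall p, D p -> 0 <= F p) ->
  \int[mu]_(p in D) F (yrefl p) = \int[mu]_(p in D) F p.
Proof.
move=> mF F0; rewrite -[in LHS]symD.
rewrite -(@ge0_integral_pushforward _ _ _ _ R (yrefl : plane -> plane) measurable_yrefl
  mu D F mD mF); last by move=> p /[!inE]; exact: F0.
by apply: (eq_measure_integral mu) => [|? A mA _]; [exact: measurable_yrefl | exact: mu2_yrefl].
Qed.

Lemma integral_yrefl (F : plane -> \bar R) : measurable_fun D F ->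
  \int[mu]_(p in D) F (yrefl p) = \int[mu]_(p in D) F p.
Proof.
move=> mF; rewrite [LHS]integralE [RHS]integralE.
rewrite (funepos_comp F yrefl) (funeneg_comp F yrefl).
by rewrite !ge0_integral_yrefl //; [exact: measurable_funeneg|exact: measurable_funepos].
Qed.

Lemma integrable_yrefl (F : plane -> \bar R) :
  mu.-integrable D F -> mu.-integrable D (F \o yrefl).
Proof.
move=> /integrableP[mF iF]; apply/integrableP; split; first exact: measurable_fun_yrefl.
by rewrite (ge0_integral_yrefl (fun p : plane => `|F p|)) //; exact: measurableT_comp.
Qed.

Local Close Scope ereal_scope.

Lemma Rintegral_yrefl (G : plane -> R) : measurable_fun D G ->
  \int[mu]_(p in D) G (yrefl p) = \int[mu]_(p in D) G p.
Proof.
by move=> mG; rewrite /Rintegral (integral_yrefl (EFin \o G)) //; exact/measurable_EFinP.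
Qed.
End SymmetricDomain.

Section PlaneTopology.
Context {R : realType}.
Local Notation plane := (measurableTypeR R * measurableTypeR R)%type.

Lemma open_measurable_plane (U : set plane) : open U -> measurable U.
Proof.
move=> oU.
pose box (a b c d : rat) : set plane :=
  `]ratr a, ratr b[%classic `*` `]ratr c, ratr d[%classic.
have -> : U = \bigcup_a \bigcup_b \bigcup_c \bigcup_d
    (if `[< box a b c d `<=` U >] then box a b c d else set0).
  apply/seteqP; split => [p Up|p]; last first.
    by move=> [a _ [b _ [c _ [d _]]]]; case: ifPn => [/asboolP|//]; apply.
  have /nbhs_ballP[e /= e0 pe] := oU p Up.
  have rat_near (x : R) (y : R) : x < y -> exists q : rat, x < ratr q < y.
    by move=> /rat_in_itvoo[q]; rewrite in_itv /=; exists q.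
  have [a /andP[a1 a2]] : exists q : rat, p.1 - e < ratr q < p.1 by apply: rat_near; lra.
  have [b /andP[b1 b2]] : exists q : rat, p.1 < ratr q < p.1 + e by apply: rat_near; lra.
  have [c /andP[c1 c2]] : exists q : rat, p.2 - e < ratr q < p.2 by apply: rat_near; lra.
  have [d /andP[d1 d2]] : exists q : rat, p.2 < ratr q < p.2 + e by apply: rat_near; lra.
  have boxU : box a b c d `<=` U.
    move=> q; rewrite /box /= !in_itv /= => -[/andP[q1 q2] /andP[q3 q4]].
    by apply: pe; split; rewrite /ball /= ltr_norml; apply/andP; split; lra.
  exists a => //; exists b => //; exists c => //; exists d => //.
  by rewrite (asboolT boxU) /box /= !in_itv /= a2 b1 c2 d1.
do 4 (apply: bigcupT_measurable_rat => ?).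
by case: ifPn => _ //; apply: measurableX; exact: measurable_itv.
Qed.

Lemma continuous_measurable_fun_plane (D : set plane) (g : plane -> R) :
  continuous g -> measurable_fun D g.
Proof.
move=> cg; apply: measurable_funTS.
apply: (measurability _ (RGenOpens.measurableE R)) => _ [_ [a [b ->]] <-].
by rewrite setTI; apply: open_measurable_plane; move/continuousP: cg; apply; exact: interval_open.
Qed.

Lemma continuous_yrefl : continuous (@yrefl R).
Proof.
move=> p; apply: (@cvg_pair _ _ _ _ (nbhs p.1) (nbhs (- p.2))); first exact: cvg_fst.
by apply: cvgN; exact: cvg_snd.
Qed.

Lemma continuous_within_lincomb (A : set (R * R)) (u v : R * R -> R) (a : R) :
  {within A, continuous u} -> {within A, continuous v} ->
  {within A, continuous (fun p => a * u p + v p)}.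
Proof.
move=> cu cv p.
have au : {for p, continuous ((cst a : subspace A -> R) \* (u : subspace A -> R))}.
  by apply: continuousM; [exact: cst_continuous | exact: cu].
exact: (@continuousD _ _ _ _ (v : subspace A -> R) p au (cv p)).
Qed.

Lemma continuous_within_yrefl (A : set (R * R)) (v : R * R -> R) :
  (forall p, A p -> A (yrefl p)) ->
  {within A, continuous v} -> {within A, continuous (v \o yrefl)}.
Proof.
move=> Ayrefl /subspace_continuousP cv; apply/subspace_continuousP => p Ap.
apply: (@cvg_comp _ _ _ yrefl v _ (within A (nbhs (yrefl p)))); last exact: cv _ (Ayrefl _ Ap).
move=> S /(continuous_yrefl p) yreflS.
have {}yreflS : nbhs p (yrefl @^-1` [set q | A q -> S q]) := yreflS.
change (nbhs p (fun q => A q -> S (yrefl q))).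
by apply: filterS yreflS => q Sq /Ayrefl; exact: Sq.
Qed.
End PlaneTopology.

Section SignedReflection.
Context {R : realType}.
Implicit Types (b c : bool) (v phi : R * R -> R).

Definition signed_refl b v : R * R -> R := fun p => (-1) ^+ b * v (yrefl p).

Lemma signed_reflK b : involutive (signed_refl b).
Proof.
move=> v; apply/funext => p.
by rewrite /signed_refl yreflK mulrA -expr2 sqrr_sign mul1r.
Qed.

Lemma pD_signed_refl b c phi p : derivable phi (yrefl p) (dir R c) ->
  derivable (signed_refl b phi) p (dir R c) /\
  pD c (signed_refl b phi) p = signed_refl (b (+) c) (pD c phi) p.
Proof.
move=> dphi.
have [dphiR pDphiR] : derivable (phi \o yrefl) p (dir R c) /\
    'D_(dir R c) (phi \o yrefl) p = (-1) ^+ c * 'D_(dir R c) phi (yrefl p).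
  rewrite (derivable_comp_linear _ _ _ _ linear_yrefl).
  rewrite (derive_comp_linear _ _ _ _ linear_yrefl) yrefl_dir.
  case: c dphi => /= dphi; last by rewrite mul1r.
  by rewrite derive_oppv // mulN1r; split => //; exact: derivable_oppv.
split; first exact: derivableZ.
rewrite /pD (_ : signed_refl b phi = (-1) ^+ b *: (phi \o yrefl)) // deriveZ // pDphiR.
by rewrite /signed_refl signr_addb -mulrA.
Qed.

Lemma iterD_signed_refl b phi :
  (forall s c p, derivable (Defs.iterD s phi) p (dir R c)) ->
  forall s, Defs.iterD s (signed_refl b phi) =
            signed_refl (b (+) odd (count id s)) (Defs.iterD s phi).
Proof.
move=> dphi; elim=> [|c s IHs] /=; first by rewrite addbF.
apply/funext => p; rewrite IHs.
have [_ ->] := pD_signed_refl (b (+) odd (count id s)) _ _ _ (dphi s c (yrefl p)).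
by rewrite oddD oddb [c (+) _]addbC addbA.
Qed.
End SignedReflection.

Section SignedReflectionOnOmega.
Context {R : realType}.
Local Notation plane := (measurableTypeR R * measurableTypeR R)%type.
Local Notation mu := (@mu2 R).
Implicit Types (l : R) (b : bool) (v phi : R * R -> R).

Lemma measurable_Om l : measurable (Om l : set plane).
Proof.
rewrite (_ : Om l = `]0, pi[%classic `*` `](- l), l[%classic); last first.
  by apply/seteqP; split => -[x y]; rewrite /Om /= !in_itv.
by apply: measurableX; exact: measurable_itv.
Qed.

Lemma Om_yrefl l : yrefl @^-1` Om l = Om l.
Proof.
apply/seteqP; split => -[x y]; rewrite /Om /yrefl /= => -[? /andP[y1 y2]];
  by split => //; apply/andP; split; lra.
Qed.

Lemma Omc_yrefl l p : Omc l p -> Omc l (yrefl p).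
Proof.
by case: p => x y; rewrite /Omc /yrefl /= => -[? /andP[y1 y2]]; split => //; apply/andP; split; lra.
Qed.

Lemma Rintegral_signed_refl l b (G : R * R -> R) : measurable_fun (Om l) G ->
  \int[mu]_(p in Om l) signed_refl b G p = (-1) ^+ b * \int[mu]_(p in Om l) G p.
Proof.
move=> mG; rewrite -(Rintegral_yrefl _ (measurable_Om l) (Om_yrefl l) _ mG).
case: b; rewrite /signed_refl /= ?expr1 ?expr0.
  by under eq_fun do rewrite mulN1r; rewrite RintegralN mulN1r.
by under eq_fun do rewrite mul1r; rewrite mul1r.
Qed.

Lemma measurable_fun_signed_refl l b v :
  measurable_fun (Om l) v -> measurable_fun (Om l) (signed_refl b v).
Proof.
move=> mv; apply: measurable_funM; first exact: measurable_cst.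
exact: (measurable_fun_yrefl _ (measurable_Om l) (Om_yrefl l)).
Qed.

Lemma continuous_signed_refl b v : continuous v -> continuous (signed_refl b v).
Proof.
move=> cv p; apply: (@continuousM _ _ (cst ((-1) ^+ b)) (v \o yrefl)).
  exact: cst_continuous.
exact: continuous_comp (continuous_yrefl p) (cv _).
Qed.

Lemma continuous_within_signed_refl l b v :
  {within Omc l, continuous v} -> {within Omc l, continuous (signed_refl b v)}.
Proof.
move=> /(continuous_within_yrefl _ _ (@Omc_yrefl l)) cv.
rewrite (_ : signed_refl b v = fun p => (-1) ^+ b * (v \o yrefl) p + 0); last first.
  by apply/funext => p; rewrite addr0.
apply: continuous_within_lincomb cv _.
by apply: continuous_subspaceT; exact: cst_continuous.
Qed.

Lemma test_fun_signed_refl l b phi : test_fun l phi -> test_fun l (signed_refl b phi).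
Proof.
move=> [dphi [cphi [K [cK [KOm phiK]]]]]; split; [|split].
- move=> s c p; rewrite (iterD_signed_refl _ _ dphi).
  exact: (pD_signed_refl _ _ _ _ (dphi s c (yrefl p))).1.
- by move=> s; rewrite (iterD_signed_refl _ _ dphi); exact: continuous_signed_refl.
exists (yrefl @` K); split; [|split].
- by apply: continuous_compact => //; apply: continuous_subspaceT; exact: continuous_yrefl.
- by move=> _ [q Kq <-]; rewrite -[Om l](Om_yrefl l) /= yreflK; exact: KOm.
- move=> p Kp; rewrite /signed_refl phiK ?mulr0 // => Kyp; apply: Kp.
  by exists (yrefl p); rewrite ?yreflK.
Qed.
End SignedReflectionOnOmega.

Section WeakDerivatives.
Context {R : realType}.
Local Notation mu := (@mu2 R).
Implicit Types (l : R) (b c : bool) (v w g : R * R -> R).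

Lemma signed_reflM b c v w :
  (fun p => signed_refl b v p * signed_refl c w p) = signed_refl (b (+) c) (fun p => v p * w p).
Proof. by apply/funext => p; rewrite /signed_refl signr_addb mulrACA. Qed.

Lemma weak_deriv_signed_refl l b v a g :
  measurable_fun (Om l) v -> measurable_fun (Om l) g -> weak_deriv l v a g ->
  weak_deriv l (signed_refl b v) a (signed_refl (b (+) odd (count id a)) g).
Proof.
move=> mv mg vg phi /(test_fun_signed_refl _ false) tpsi.
move: (signed_refl false phi) tpsi (signed_reflK false phi) => psi tpsi <-.
have [dpsi [cpsi _]] := tpsi.
have mpsi s : measurable_fun (Om l) (Defs.iterD s psi).
  exact: continuous_measurable_fun_plane.
rewrite (iterD_signed_refl _ _ dpsi) signed_reflM addFb.
rewrite Rintegral_signed_refl; last exact: measurable_funM.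
rewrite (vg psi tpsi) signed_reflM addbF Rintegral_signed_refl; last first.
  exact: measurable_funM (mpsi [::]).
by rewrite mulrCA signr_addb -mulrA.
Qed.
End WeakDerivatives.

Section SobolevSpaces.
Context {R : realType}.
Local Notation mu := (@mu2 R).
Local Notation triple := ((R * R -> R) * (R * R -> R) * (R * R -> R))%type.
Implicit Types (l : R) (b : bool) (v : R * R -> R).

(* The mixed derivative picks up one more sign than the pure ones, from d/dy. *)
Definition refl_wit b (w : triple) : triple :=
  ((signed_refl b w.1.1, signed_refl (~~ b) w.1.2), signed_refl b w.2).

Lemma L2_signed_refl l b v : L2 l v -> L2 l (signed_refl b v).
Proof.
move=> [mv iv]; split; first exact: measurable_fun_signed_refl.
rewrite (_ : (fun p => _) = (fun p => (v p ^+ 2)%:E) \o yrefl); last first.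
  by apply/funext => p; rewrite /signed_refl exprMn sqrr_sign mul1r.
exact: (integrable_yrefl _ (measurable_Om l) (Om_yrefl l)).
Qed.

Lemma H2_signed_refl l b v : H2 l v -> H2 l (signed_refl b v).
Proof.
move=> [cv [Lv dv]]; split; first exact: continuous_within_signed_refl.
split; first exact: L2_signed_refl.
move=> a /dv[g [Lg vg]]; exists (signed_refl (b (+) odd (count id a)) g).
by split; [exact: L2_signed_refl | exact: weak_deriv_signed_refl Lv.1 Lg.1 vg].
Qed.

Lemma H2s_signed_refl l b v : H2s l v -> H2s l (signed_refl b v).
Proof.
move=> [Hv v0]; split; first exact: H2_signed_refl.
move=> y /andP[yl ly]; rewrite /signed_refl /yrefl /=.
have [-> ->] : v (0, - y) = 0 /\ v (pi, - y) = 0 by apply: v0; apply/andP; split; lra.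
by rewrite mulr0.
Qed.

Lemma D2wit_signed_refl l b v w : measurable_fun (Om l) v ->
  D2wit l v w -> D2wit l (signed_refl b v) (refl_wit b w).
Proof.
move=> mv [L11 [L12 [L22 [v11 [v12 v22]]]]].
do 3 (split; first exact: L2_signed_refl).
split; first by rewrite -[b in refl_wit b](addbF b); exact: weak_deriv_signed_refl L11.1 v11.
split; first by rewrite /= -addbT; exact: weak_deriv_signed_refl L12.1 v12.
by rewrite /= -[b in signed_refl b w.2](addbF b); exact: weak_deriv_signed_refl L22.1 v22.
Qed.

Lemma H2form_refl_wit (l sigma : R) b (wu wv : triple) :
  L2 l wu.1.1 -> L2 l wu.1.2 -> L2 l wu.2 ->
  L2 l wv.1.1 -> L2 l wv.1.2 -> L2 l wv.2 ->
  H2form l sigma (refl_wit b wu) (wsub (refl_wit b wv) (refl_wit b wu)) =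
  H2form l sigma wu (wsub wv wu).
Proof.
move=> [m1 _] [m2 _] [m3 _] [m4 _] [m5 _] [m6 _].
rewrite /H2form -[in RHS](Rintegral_yrefl _ (measurable_Om l) (Om_yrefl l)); last first.
  rewrite /wsub /=.
  by repeat first [ apply: measurable_funB | apply: measurable_funD | apply: measurable_funM
                  | exact: measurable_cst | assumption ].
congr Rintegral; apply/funext => p.
by rewrite /wsub /refl_wit /signed_refl /=; case: b; rewrite /= ?expr1 ?expr0; ring.
Qed.
End SobolevSpaces.

Section Functionals.
Context {R : realType} {l : R} {f : (R * R -> R) -> R} (f_dual : dualC0 l f).

Let continuous_within_cst0 : {within Omc l, continuous (fun _ : R * R => 0 : R)}.
Proof. by apply: continuous_subspaceT; exact: cst_continuous. Qed.

Lemma dualC0_cst0 : f (fun _ => 0) = 0.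
Proof.
have := f_dual.1 _ _ 1 continuous_within_cst0 continuous_within_cst0.
rewrite (_ : (fun _ => 1 * 0 + 0) = fun _ => 0); last by apply/funext => p; rewrite mulr0 addr0.
by rewrite mul1r => ?; lra.
Qed.

Lemma dualC0_signed_refl b :
  (forall h, {within Omc l, continuous h} -> f (fun p => (h p - signed_refl b h p) / 2) = 0) ->
  forall h, {within Omc l, continuous h} -> f (signed_refl b h) = f h.
Proof.
move=> f_part h ch; have := f_part h ch.
have ch' := continuous_within_signed_refl l b h ch.
have cNh' := continuous_within_lincomb _ _ _ (- 2^-1) ch' continuous_within_cst0.
rewrite (_ : (fun p => _) = fun p => 2^-1 * h p + (- 2^-1 * signed_refl b h p + 0)); last first.
  by apply/funext => p; rewrite addr0 mulrC mulrBr mulNr.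
rewrite (f_dual.1 _ _ _ ch cNh') (f_dual.1 _ _ _ ch' continuous_within_cst0) dualC0_cst0.
rewrite addr0 mulNr -mulrBr => /eqP; rewrite mulf_eq0 invr_eq0 pnatr_eq0 /= subr_eq0.
by move=> /eqP.
Qed.

Lemma oddpE (u : R * R -> R) : oddp u = fun p => (u p - signed_refl false u p) / 2.
Proof. by apply/funext => p; rewrite /oddp /signed_refl mul1r. Qed.

Lemma evenpE (u : R * R -> R) : evenp u = fun p => (u p - signed_refl true u p) / 2.
Proof. by apply/funext => p; rewrite /evenp /signed_refl mulN1r opprK. Qed.

Lemma fodd_zero_signed_refl : fodd_zero l f ->
  forall h, {within Omc l, continuous h} -> f (signed_refl false h) = f h.
Proof. by move=> f_odd; apply: dualC0_signed_refl => h ch; rewrite -oddpE; exact: f_odd. Qed.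

Lemma feven_zero_signed_refl : feven_zero l f ->
  forall h, {within Omc l, continuous h} -> f (signed_refl true h) = f h.
Proof. by move=> f_even; apply: dualC0_signed_refl => h ch; rewrite -evenpE; exact: f_even. Qed.
End Functionals.

Section Obstacles.
Context {R : realType}.
Implicit Types (OmO : set (R * R)) (psim psip v : R * R -> R).

Definition in_obstacles OmO psim psip v := forall p, OmO p -> psim p <= v p <= psip p.

Lemma even_obstacles_signed_refl {OmO psim psip} :
  (forall p, OmO p -> OmO (yrefl p)) -> even_on OmO psim -> even_on OmO psip ->
  forall v, in_obstacles OmO psim psip v -> in_obstacles OmO psim psip (signed_refl false v).
Proof.
move=> OmO_yrefl psim_even psip_even v v_obs p Op.
by rewrite /signed_refl mul1r -psim_even // -psip_even //; exact: v_obs (OmO_yrefl p Op).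
Qed.

Lemma opposite_obstacles_signed_refl {OmO psim psip} :
  (forall p, OmO p -> OmO (yrefl p)) -> (forall p, OmO p -> psim p = - psip p) ->
  even_on OmO psim ->
  forall v, in_obstacles OmO psim psip v -> in_obstacles OmO psim psip (signed_refl true v).
Proof.
move=> OmO_yrefl psim_opp psim_even v v_obs p Op; have Oyp := OmO_yrefl p Op.
have := v_obs _ Oyp; have := psim_even p Op; have := psim_opp p Op; have := psim_opp _ Oyp.
by rewrite /signed_refl /yrefl mulN1r => ? ? ? /andP[? ?]; apply/andP; split; lra.
Qed.
End Obstacles.

Section Symmetry.
Context {R : realType} {l sigma : R} {OmO : set (R * R)} {f : (R * R -> R) -> R}.
Context {psim psip : R * R -> R} {b : bool}.
Hypothesis obstacles_refl :
  forall v, in_obstacles OmO psim psip v -> in_obstacles OmO psim psip (signed_refl b v).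
Hypothesis f_refl : forall h, {within Omc l, continuous h} -> f (signed_refl b h) = f h.

Lemma signed_reflB (v w : R * R -> R) :
  signed_refl b (fun p => v p - w p) = fun p => signed_refl b v p - signed_refl b w p.
Proof. by apply/funext => p; rewrite /signed_refl mulrBr. Qed.

Lemma Kset_signed_refl v : Kset l OmO psim psip v -> Kset l OmO psim psip (signed_refl b v).
Proof. by move=> [Hv Ov]; split; [exact: H2s_signed_refl | exact: obstacles_refl]. Qed.

Lemma VIsol_signed_refl u :
  VIsol l sigma OmO f psim psip u -> VIsol l sigma OmO f psim psip (signed_refl b u).
Proof.
move=> [Ku VIu]; split; first exact: Kset_signed_refl.
move=> wu Dwu phi Kphi wphi Dphi.
have Dwu' : D2wit l u (refl_wit b wu).
  rewrite -(signed_reflK b u); apply: D2wit_signed_refl Dwu.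
  exact: measurable_fun_signed_refl Ku.1.1.2.1.1.
have := VIu _ Dwu' _ (Kset_signed_refl _ Kphi) _ (D2wit_signed_refl l b _ _ Kphi.1.1.2.1.1 Dphi).
have [Lu11 [Lu12 [Lu22 _]]] := Dwu; have [Lphi11 [Lphi12 [Lphi22 _]]] := Dphi.
rewrite H2form_refl_wit // -[u in fun p => _ - u p](signed_reflK b u) -signed_reflB f_refl //.
rewrite (_ : (fun p => _) = fun p => -1 * signed_refl b u p + phi p); last first.
  by apply/funext => p; rewrite mulN1r addrC.
apply: continuous_within_lincomb Kphi.1.1.1.
exact: continuous_within_signed_refl Ku.1.1.1.
Qed.

Lemma is_u_f_signed_refl u :
  is_u_f l sigma OmO f psim psip u -> forall p, Omc l p -> signed_refl b u p = u p.
Proof. by move=> [u_sol u_unique]; apply/u_unique/VIsol_signed_refl. Qed.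
End Symmetry.

Theorem lemma4p4 (R : realType) (l sigma : R) (OmO : set (R * R))
    (f : (R * R -> R) -> R) (gm gp : R) (psim psip u : R * R -> R) :
  0 < l -> 0 < sigma < 1 ->
  OmO !=set0 -> closed OmO -> OmO `<=` Omc l ->
  (forall p : R * R, OmO p <-> OmO (p.1, - p.2)) ->
  dualC0 l f -> 0 < gm -> 0 < gp ->
  Ominus OmO gm psim -> Oplus OmO gp psip ->
  is_u_f l sigma OmO f psim psip u ->
  ((even_on OmO psim -> even_on OmO psip -> fodd_zero l f ->
      forall p, Omc l p -> oddp u p = 0) /\
   ((forall p, OmO p -> psim p = - psip p) -> even_on OmO psim -> feven_zero l f ->
      forall p, Omc l p -> evenp u p = 0)).
Proof.
(* The remaining hypotheses only serve the existence of u, which is assumed here. *)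
move=> _ _ _ _ _ OmO_sym f_dual _ _ _ _ u_sol.
have OmO_yrefl p : OmO p -> OmO (yrefl p) := (OmO_sym p).1.
split=> [psim_even psip_even f_odd | psim_opp psim_even f_even] p Op.
  have obstacles_refl := even_obstacles_signed_refl OmO_yrefl psim_even psip_even.
  have f_refl := fodd_zero_signed_refl f_dual f_odd.
  by rewrite oddpE (is_u_f_signed_refl obstacles_refl f_refl u u_sol p Op) subrr mul0r.
have obstacles_refl := opposite_obstacles_signed_refl OmO_yrefl psim_opp psim_even.
have f_refl := feven_zero_signed_refl f_dual f_even.
by rewrite evenpE (is_u_f_signed_refl obstacles_refl f_refl u u_sol p Op) subrr mul0r.
Qed.
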